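(* Let $\lambda\in\mathbb R\cup i\mathbb R$ be a constant, $\vec H\in\Gamma(E)$, and let $\varphi\in\Gamma(\Sigma)$ solve $D\varphi=\vec H\cdot\varphi-2\lambda\varphi$ and satisfy, for all $X\in TM$, $X|\varphi^+|^2=2\,\Re e\langle \lambda X\cdot\varphi^{-},\varphi^{+}\rangle$ and $X|\varphi^-|^2=2\,\Re e\langle \lambda X\cdot\varphi^{+},\varphi^{-}\rangle$. Fix $p\in M$ at which $\varphi^{++},\varphi^{--},\varphi^{+-},\varphi^{-+}$ are all non-zero, an orthonormal basis $(e_1,e_2)$ of $T_pM$ and a unit vector $e_3\in E_p$ with $\vec H(p)=|\vec H(p)|e_3$. Define on $T_pM$ the bilinear forms $A_{++}(X,Y)=\Re e\langle\nabla_X\varphi^{++}-\lambda X\cdot\varphi^{-+},Y\cdot e_3\cdot\varphi^{--}\rangle$, $A_{--}(X,Y)=\Re e\langle\nabla_X\varphi^{--}-\lambda X\cdot\varphi^{+-},Y\cdot e_3\cdot\varphi^{++}\rangle$, $A_{+-}(X,Y)=\Re e\langle\nabla_X\varphi^{+-}-\lambda X\cdot\varphi^{--},Y\cdot e_3\cdot\varphi^{-+}\rangle$, $A_{-+}(X,Y)=\Re e\langle\nabla_X\varphi^{-+}-\lambda X\cdot\varphi^{++},Y\cdot e_3\cdot\varphi^{+-}\rangle$, and $F_+=\frac{A_{++}}{|\varphi^{--}|^2}-\frac{A_{--}}{|\varphi^{++}|^2}$, $F_-=\frac{A_{+-}}{|\varphi^{-+}|^2}-\frac{A_{-+}}{|\varphi^{+-}|^2}$,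 with associated endomorphisms $F^\pm(X)=F_\pm(X,e_1)e_1+F_\pm(X,e_2)e_2$. Then for all $X\in T_pM$: $$\Re e\langle F^+(X)\cdot e_3\cdot\varphi^{--},\varphi^{++}\rangle=0\quad\text{and}\quad \Re e\langle F^-(X)\cdot e_3\cdot\varphi^{-+},\varphi^{+-}\rangle=0.$$
   Context: Setup. $(M^2,g)$ is an oriented Riemannian surface with a fixed spin structure, and $E\to M$ is an oriented real vector bundle of rank $2$ with a metric $\langle\cdot,\cdot\rangle$, a compatible connection $\nabla^E$ and a fixed spin structure. $\Sigma M=\Sigma^+M\oplus\Sigma^-M$ and $\Sigma E=\Sigma^+E\oplus\Sigma^-E$ denote the complex spinor bundles of $M$ and $E$ with their half-spinor splittings, spinorial connections $\nabla^{\Sigma M},\nabla^{\Sigma E}$ and Clifford multiplications $\cdot_M,\cdot_E$. The twisted spinor bundle is $\Sigma=\Sigma M\otimes\Sigma E$, with connection $\nabla=\nabla^{\Sigma M}\otimes\mathrm{Id}+\mathrm{Id}\otimes\nabla^{\Sigma E}$ and Clifford multiplication by vectors of $TM\oplus E$ given on $\varphi=\alpha\otimes\sigma$ by $X\cdot\varphi=(X\cdot_M\alpha)\otimes\overline{\sigma}$ if $X\in TM$ and $X\cdot\varphi=\alpha\otimes(X\cdot_E\sigma)$ if $X\in E$, where $\overline\sigma=\sigma^+-\sigma^-$; this extends to an action of the Clifford bundle $Cl(TM\oplus E)$. $\Sigma$ carries its natural Hermitian product $\langle\cdot,\cdot\rangle$ ($\mathbb C$-linear in the first slot, antilinear in the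 second), compatible with $\nabla$, for which Clifford multiplication by vectors is skew-Hermitian; $\Re e\langle\cdot,\cdot\rangle$ is the associated real scalar product and $|\cdot|$ the norm. The Dirac operator is $D\varphi=e_1\cdot\nabla_{e_1}\varphi+e_2\cdot\nabla_{e_2}\varphi$, $(e_1,e_2)$ a local orthonormal frame of $TM$. Write $\Sigma^{\epsilon\delta}=\Sigma^\epsilon M\otimes\Sigma^\delta E$ ($\epsilon,\delta\in\{+,-\}$), decompose $\varphi=\varphi^{++}+\varphi^{--}+\varphi^{+-}+\varphi^{-+}$ accordingly, and set $\varphi^+=\varphi^{++}+\varphi^{--}$, $\varphi^-=\varphi^{+-}+\varphi^{-+}$. For $\lambda\in\mathbb C$, $\lambda X\cdot\varphi$ means complex scalar multiplication of $X\cdot\varphi$. *)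

(* Pointwise (fibre-at-p) model of the twisted spinor
   bundle  Sigma_p = Sigma_p M (x) Sigma_p E  over a number-closed field C
   (e.g. algC, a model of the complex numbers). *)
From HB Require Import structures.
From mathcomp Require Import all_boot all_order all_algebra.
Set Implicit Arguments. Unset Strict Implicit. Unset Printing Implicit Defensive.
Import Order.TTheory GRing.Theory Num.Theory.
Local Open Scope ring_scope.

(* A spinor in the fibre Sigma_p, written in the basis adapted to the
   splitting  Sigma^{eps delta} = Sigma^eps M (x) Sigma^delta E :
   phi eps delta is the component in Sigma^{eps delta}  (true = +, false = -). *)
Definition spinor (C : numClosedFieldType) := bool -> bool -> C.

Section Spinors.
Variable C : numClosedFieldType.
Implicit Types (phi psi : spinor C) (a b : bool) (c : C).

Definition sgnb b : C := if b then 1 else -1.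

Definition sp_add phi psi : spinor C := fun a b => phi a b + psi a b.
Definition sp_scale c phi : spinor C := fun a b => c * phi a b.
Definition sp_sub phi psi : spinor C := fun a b => phi a b - psi a b.

Definition sp_proj a0 b0 phi : spinor C :=
  fun a b => if (a == a0) && (b == b0) then phi a b else 0.
Definition sp_plus phi : spinor C := sp_add (sp_proj true true phi) (sp_proj false false phi).
Definition sp_minus phi : spinor C := sp_add (sp_proj true false phi) (sp_proj false true phi).

Definition sp_herm phi psi : C :=
  phi true true * (psi true true)^* + phi true false * (psi true false)^*
  + phi false true * (psi false true)^* + phi false false * (psi false false)^*.
Definition sp_norm2 phi : C := 'Re (sp_herm phi phi).

(* Clifford multiplication by the orthonormal frame e1, e2 of T_pM and
   e3 of E_p, in the standard representation
     e1 = [[0,i],[i,0]], e2 = [[0,1],[-1,0]] on Sigma M and on Sigma E,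
   so that Sigma^+ is the +1 eigenspace of the complex volume element i e1 e2
   (resp. i e3 e4), together with the twisting rule
     X.(alpha (x) sigma) = (X.alpha) (x) sigma_bar   for X in TM,
     X.(alpha (x) sigma) = alpha (x) (X.sigma)      for X in E. *)
Definition cl_e1 phi : spinor C := fun a b => 'i * sgnb b * phi (~~ a) b.
Definition cl_e2 phi : spinor C := fun a b => sgnb a * sgnb b * phi (~~ a) b.
Definition cl_e3 phi : spinor C := fun a b => 'i * phi a (~~ b).

(* Clifford multiplication by the tangent vector X = x1 e1 + x2 e2 (x1, x2 real) *)
Definition cl_TM (x1 x2 : C) phi : spinor C :=
  sp_add (sp_scale x1 (cl_e1 phi)) (sp_scale x2 (cl_e2 phi)).

(* nabla_X phi at p for X = x1 e1 + x2 e2, where psi1 = nabla_{e1} phi (p),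
   psi2 = nabla_{e2} phi (p) *)
Definition nablaX (x1 x2 : C) (psi1 psi2 : spinor C) : spinor C :=
  sp_add (sp_scale x1 psi1) (sp_scale x2 psi2).

Definition dirac_at (psi1 psi2 : spinor C) : spinor C :=
  sp_add (cl_e1 psi1) (cl_e2 psi2).

(* Here nabla_X (phi^{ab}) = (nabla_X phi)^{ab} since nabla preserves the splitting. *)
Definition Aform (lam : C) (phi psi1 psi2 : spinor C)
    (a b a' b' a'' b'' : bool) (x1 x2 y1 y2 : C) : C :=
  'Re (sp_herm
         (sp_sub (sp_proj a b (nablaX x1 x2 psi1 psi2))
                 (sp_scale lam (cl_TM x1 x2 (sp_proj a' b' phi))))
         (cl_TM y1 y2 (cl_e3 (sp_proj a'' b'' phi)))).

Definition A_pp lam phi psi1 psi2 := Aform lam phi psi1 psi2 true true false true false false.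
Definition A_mm lam phi psi1 psi2 := Aform lam phi psi1 psi2 false false true false true true.
Definition A_pm lam phi psi1 psi2 := Aform lam phi psi1 psi2 true false false false false true.
Definition A_mp lam phi psi1 psi2 := Aform lam phi psi1 psi2 false true true true true false.

Definition F_plus lam phi psi1 psi2 (x1 x2 y1 y2 : C) : C :=
  A_pp lam phi psi1 psi2 x1 x2 y1 y2 / sp_norm2 (sp_proj false false phi)
  - A_mm lam phi psi1 psi2 x1 x2 y1 y2 / sp_norm2 (sp_proj true true phi).
Definition F_minus lam phi psi1 psi2 (x1 x2 y1 y2 : C) : C :=
  A_pm lam phi psi1 psi2 x1 x2 y1 y2 / sp_norm2 (sp_proj false true phi)
  - A_mp lam phi psi1 psi2 x1 x2 y1 y2 / sp_norm2 (sp_proj true false phi).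

Definition Fend_plus lam phi psi1 psi2 (x1 x2 : C) : C * C :=
  (F_plus lam phi psi1 psi2 x1 x2 1 0, F_plus lam phi psi1 psi2 x1 x2 0 1).
Definition Fend_minus lam phi psi1 psi2 (x1 x2 : C) : C * C :=
  (F_minus lam phi psi1 psi2 x1 x2 1 0, F_minus lam phi psi1 psi2 x1 x2 0 1).

End Spinors.

From HB Require Import structures.
From mathcomp Require Import all_boot all_order all_algebra.
From mathcomp Require Import ring.
Import Order.TTheory GRing.Theory Num.Theory.
Local Open Scope ring_scope.

(* Everything happens in the fibre Sigma_p, where each Sigma^{ab} is a complex
   line.  Write X = x1 e1 + x2 e2, and for a component (a,b) with opposite
   component (~a,~b) let
     D_ab = (nabla_X phi)^{ab} - lam X.phi^{~a b}     (an element of Sigma^{ab}),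
   so that A_ab(X,Y) = Re<D_ab, Y.e3.phi^{~a~b}>.  Three facts about the real
   scalar product Re<.,.> are established first:
   (1) e1.e3 and e2.e3 are skew-Hermitian, since e1, e2, e3 are and e3
       anticommutes with e1, e2;
   (2) for psi in Sigma^{ab}, the spinors e1.e3.psi, e2.e3.psi are an orthogonal
       real basis of the plane Sigma^{~a~b}, both of squared length |psi|^2,
       whence a Parseval identity in that fibre;
   (3) the components Sigma^{eps delta} are mutually orthogonal.
   Expanding F(X) = F(X,e1) e1 + F(X,e2) e2, facts (1) and (2) give
     Re<F(X).e3.phi^{~a~b}, phi^{ab}> = Re<D_ab, phi^{ab}> + Re<D_~a~b, phi^{~a~b}>
   (F_at_identity), and by (3) the right-hand side is Re<nabla_X phi^+, phi^+>
   - Re<lam X.phi^-, phi^+> for (a,b) = (+,+), resp. the same with phi^- for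
   (a,b) = (+,-).  The hypotheses X|phi^{+-}|^2 = 2 Re<lam X.phi^{-+}, phi^{+-}>
   say exactly that these differences vanish. *)

Section TwistedSpinorFibre.
Variable C : numClosedFieldType.
Implicit Types (u v s t : spinor C) (a b : bool).

Definition sp_dot u v : C := 'Re (sp_herm u v).

Lemma sgnbN b : sgnb C (~~ b) = - sgnb C b.
Proof. by case: b; rewrite /= ?opprK. Qed.

Lemma sgnb_sqr b : sgnb C b * sgnb C b = 1.
Proof. by case: b; rewrite /= ?mulrNN mulr1. Qed.

Lemma sp_herm_conj u v : sp_herm v u = (sp_herm u v)^*.
Proof. by rewrite /sp_herm !rmorphD !rmorphM /= !conjCK ![_ * _^*]mulrC. Qed.

Lemma sp_hermDl u v t : sp_herm (sp_add u v) t = sp_herm u t + sp_herm v t.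
Proof. rewrite /sp_herm /sp_add; ring. Qed.

Lemma sp_hermZl c u t : sp_herm (sp_scale c u) t = c * sp_herm u t.
Proof. rewrite /sp_herm /sp_scale; ring. Qed.

Lemma sp_hermNr u v w : (forall a b, w a b = - v a b) -> sp_herm u w = - sp_herm u v.
Proof. move=> Hw; rewrite /sp_herm !Hw !rmorphN; ring. Qed.
Arguments sp_hermNr u {v w}.

Lemma sp_dotC u v : sp_dot u v = sp_dot v u.
Proof. by rewrite /sp_dot sp_herm_conj Re_conj. Qed.

Lemma sp_dotDl u v t : sp_dot (sp_add u v) t = sp_dot u t + sp_dot v t.
Proof. by rewrite /sp_dot sp_hermDl raddfD. Qed.

Lemma sp_dotZl c u t : c \is Num.real -> sp_dot (sp_scale c u) t = c * sp_dot u t.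
Proof. by move=> Rc; rewrite /sp_dot sp_hermZl ReMl. Qed.

Lemma sp_dot_cl_TMl c1 c2 s t : c1 \is Num.real -> c2 \is Num.real ->
  sp_dot (cl_TM c1 c2 s) t = c1 * sp_dot (cl_e1 s) t + c2 * sp_dot (cl_e2 s) t.
Proof. by move=> R1 R2; rewrite /cl_TM sp_dotDl !sp_dotZl. Qed.

Lemma sp_dot_cl_TMr c1 c2 s t : c1 \is Num.real -> c2 \is Num.real ->
  sp_dot t (cl_TM c1 c2 s) = c1 * sp_dot t (cl_e1 s) + c2 * sp_dot t (cl_e2 s).
Proof. by move=> R1 R2; rewrite sp_dotC sp_dot_cl_TMl // ![sp_dot _ t]sp_dotC. Qed.

Lemma cl_e1_skew u v : sp_herm (cl_e1 u) v = - sp_herm u (cl_e1 v).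
Proof. rewrite /sp_herm /cl_e1 /= !rmorphM /= !rmorphN /= rmorph1 conjCi; ring. Qed.

Lemma cl_e2_skew u v : sp_herm (cl_e2 u) v = - sp_herm u (cl_e2 v).
Proof. rewrite /sp_herm /cl_e2 /= !rmorphM /= !rmorphN /= rmorph1; ring. Qed.

Lemma cl_e3_skew u v : sp_herm (cl_e3 u) v = - sp_herm u (cl_e3 v).
Proof. rewrite /sp_herm /cl_e3 /= !rmorphM /= conjCi /=; ring. Qed.

(* e3 in E anticommutes with e1, e2 in TM (a consequence of the twisting by
   sigma |-> sigma-bar). *)
Lemma cl_e3_e1_anti v a b : cl_e3 (cl_e1 v) a b = - cl_e1 (cl_e3 v) a b.
Proof. by rewrite /cl_e1 /cl_e3 sgnbN; ring. Qed.

Lemma cl_e3_e2_anti v a b : cl_e3 (cl_e2 v) a b = - cl_e2 (cl_e3 v) a b.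
Proof. by rewrite /cl_e2 /cl_e3 sgnbN; ring. Qed.

Lemma frame_skew (cl : spinor C -> spinor C) :
  (forall u v, sp_herm (cl u) v = - sp_herm u (cl v)) ->
  (forall v a b, cl_e3 (cl v) a b = - cl (cl_e3 v) a b) ->
  forall u t, sp_dot (cl (cl_e3 u)) t = - sp_dot (cl (cl_e3 t)) u.
Proof.
move=> skew anti u t.
rewrite /sp_dot skew cl_e3_skew opprK (sp_hermNr _ (anti t)) raddfN.
by rewrite -/(sp_dot _ _) sp_dotC.
Qed.

Lemma sp_herm_sum u v :
  sp_herm u v = \sum_(p : bool * bool) u p.1 p.2 * (v p.1 p.2)^*.
Proof.
rewrite -(pair_bigA _ (fun a b => u a b * (v a b)^*)) /= !big_bool /=.
by rewrite /sp_herm !addrA.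
Qed.

Definition sp_supp a0 b0 s := forall a b, (a, b) != (a0, b0) -> s a b = 0.

Lemma sp_dot_supp a0 b0 s :
  sp_supp a0 b0 s -> forall u, sp_dot u s = 'Re (u a0 b0 * (s a0 b0)^*).
Proof.
move=> Hs u; rewrite /sp_dot sp_herm_sum (bigD1 (a0, b0)) //= big1 ?addr0 //.
by case=> a b /= ne; rewrite Hs // rmorph0 mulr0.
Qed.
Arguments sp_dot_supp {a0 b0 s}.

Lemma proj_supp a b v : sp_supp a b (sp_proj a b v).
Proof. by move=> x y; rewrite xpair_eqE /sp_proj => /negPf ->. Qed.

Lemma proj_val a b v : sp_proj a b v a b = v a b.
Proof. by rewrite /sp_proj !eqxx. Qed.

Lemma frame1_supp a b v : sp_supp (~~ a) (~~ b) (cl_e1 (cl_e3 (sp_proj a b v))).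
Proof.
move=> x y; rewrite xpair_eqE /cl_e1 /cl_e3 /sp_proj.
by case: a b x y => [] [] [] [] //= _; rewrite !mulr0.
Qed.

Lemma frame2_supp a b v : sp_supp (~~ a) (~~ b) (cl_e2 (cl_e3 (sp_proj a b v))).
Proof.
move=> x y; rewrite xpair_eqE /cl_e2 /cl_e3 /sp_proj.
by case: a b x y => [] [] [] [] //= _; rewrite !mulr0.
Qed.

Lemma frame1_val a b v :
  cl_e1 (cl_e3 (sp_proj a b v)) (~~ a) (~~ b) = sgnb C b * v a b.
Proof. rewrite /cl_e1 /cl_e3 /sp_proj !negbK !eqxx sgnbN /=; ring: (mulCii C). Qed.

Lemma frame2_val a b v :
  cl_e2 (cl_e3 (sp_proj a b v)) (~~ a) (~~ b)
  = sgnb C (~~ a) * sgnb C (~~ b) * 'i * v a b.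
Proof. rewrite /cl_e2 /cl_e3 /sp_proj !negbK !eqxx /=; ring. Qed.

(* Parseval in C = R^2 for the orthogonal basis (s1 w, s2 i w), s1, s2 = +-1. *)
Lemma Re_parseval (s1 s2 w u t : C) :
  s1 \is Num.real -> s2 \is Num.real -> s1 * s1 = 1 -> s2 * s2 = 1 ->
  'Re (u * (s1 * w)^*) * 'Re (t * (s1 * w)^*)
  + 'Re (u * (s2 * 'i * w)^*) * 'Re (t * (s2 * 'i * w)^*)
  = `|w| ^+ 2 * 'Re (u * t^*).
Proof.
move=> R1 R2 sq1 sq2; rewrite !ReE normCK !rmorphM /= !conjCK conjCi.
rewrite !(conj_Creal R1) !(conj_Creal R2).
by field: (mulCii C) sq1 sq2.
Qed.

Lemma sp_norm2_proj a b v : sp_norm2 (sp_proj a b v) = `|v a b| ^+ 2.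
Proof.
rewrite /sp_norm2 -/(sp_dot _ _) (sp_dot_supp (proj_supp a b v)) proj_val -normCK.
by apply/Creal_ReP; rewrite realX ?normr_real.
Qed.

Lemma frame_parseval a b v u t :
  sp_dot u (cl_e1 (cl_e3 (sp_proj a b v))) * sp_dot (cl_e1 (cl_e3 (sp_proj a b v))) t
  + sp_dot u (cl_e2 (cl_e3 (sp_proj a b v))) * sp_dot (cl_e2 (cl_e3 (sp_proj a b v))) t
  = sp_norm2 (sp_proj a b v) * sp_dot u (sp_proj (~~ a) (~~ b) t).
Proof.
rewrite ![sp_dot _ t]sp_dotC !(sp_dot_supp (frame1_supp a b v)).
rewrite !(sp_dot_supp (frame2_supp a b v)) (sp_dot_supp (proj_supp _ _ t)).
rewrite proj_val frame1_val frame2_val sp_norm2_proj Re_parseval //.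
- by case: b; rewrite /= ?realN real1.
- by rewrite realM //; case: (~~ a); case: (~~ b); rewrite /= ?realN real1.
- exact: sgnb_sqr.
- by rewrite mulrACA !sgnb_sqr mulr1.
Qed.

Section PairedForms.
Variables (lam : C) (phi psi1 psi2 : spinor C) (x1 x2 : C).

Definition defect a b : spinor C :=
  sp_sub (sp_proj a b (nablaX x1 x2 psi1 psi2))
         (sp_scale lam (cl_TM x1 x2 (sp_proj (~~ a) b phi))).

(* A_ab(X,Y); A_{++}, A_{--}, A_{+-}, A_{-+} are A_at for (a,b) = (+,+), (-,-),
   (+,-), (-,+). *)
Definition A_at a b (y1 y2 : C) : C :=
  Aform lam phi psi1 psi2 a b (~~ a) b (~~ a) (~~ b) x1 x2 y1 y2.

(* F = A_ab/|phi^{~a~b}|^2 - A_~a~b/|phi^{ab}|^2; F_+ and F_- are F_at for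
   (a,b) = (+,+) and (+,-). *)
Definition F_at a b (y1 y2 : C) : C :=
  A_at a b y1 y2 / sp_norm2 (sp_proj (~~ a) (~~ b) phi)
  - A_at (~~ a) (~~ b) y1 y2 / sp_norm2 (sp_proj a b phi).

Lemma A_at_e1 a b :
  A_at a b 1 0 = sp_dot (defect a b) (cl_e1 (cl_e3 (sp_proj (~~ a) (~~ b) phi))).
Proof.
rewrite /A_at /Aform -/(defect a b) -/(sp_dot _ _) sp_dot_cl_TMr ?real0 ?real1 //.
by rewrite mul1r mul0r addr0.
Qed.

Lemma A_at_e2 a b :
  A_at a b 0 1 = sp_dot (defect a b) (cl_e2 (cl_e3 (sp_proj (~~ a) (~~ b) phi))).
Proof.
rewrite /A_at /Aform -/(defect a b) -/(sp_dot _ _) sp_dot_cl_TMr ?real0 ?real1 //.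
by rewrite mul1r mul0r add0r.
Qed.

(* F takes real values, so F(X) is a genuine tangent vector. *)
Lemma F_at_real a b y1 y2 : F_at a b y1 y2 \is Num.real.
Proof. by rewrite rpredB // rpred_div // Creal_Re. Qed.

Lemma sp_dot_proj_idem u a b t :
  sp_dot u (sp_proj a b (sp_proj a b t)) = sp_dot u (sp_proj a b t).
Proof. by rewrite !(sp_dot_supp (proj_supp _ _ _)) !proj_val. Qed.

Lemma F_at_identity a b : phi a b != 0 -> phi (~~ a) (~~ b) != 0 ->
  sp_dot (cl_TM (F_at a b 1 0) (F_at a b 0 1) (cl_e3 (sp_proj (~~ a) (~~ b) phi)))
         (sp_proj a b phi)
  = sp_dot (defect a b) (sp_proj a b phi)
    + sp_dot (defect (~~ a) (~~ b)) (sp_proj (~~ a) (~~ b) phi).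
Proof.
move=> nz_ab nz_ab'.
have Nw : sp_norm2 (sp_proj a b phi) != 0 by rewrite sp_norm2_proj sqrf_eq0 normr_eq0.
have Nv : sp_norm2 (sp_proj (~~ a) (~~ b) phi) != 0.
  by rewrite sp_norm2_proj sqrf_eq0 normr_eq0.
have Pv := frame_parseval (~~ a) (~~ b) phi (defect a b) (sp_proj a b phi).
have Pw := frame_parseval a b phi (defect (~~ a) (~~ b)) (sp_proj (~~ a) (~~ b) phi).
rewrite !negbK !sp_dot_proj_idem in Pv Pw.
(* e_j.e3.phi^{~a~b} paired with phi^{ab} is minus e_j.e3.phi^{ab} paired with
   phi^{~a~b}. *)
have S1 := frame_skew _ cl_e1_skew cl_e3_e1_anti
             (sp_proj (~~ a) (~~ b) phi) (sp_proj a b phi).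
have S2 := frame_skew _ cl_e2_skew cl_e3_e2_anti
             (sp_proj (~~ a) (~~ b) phi) (sp_proj a b phi).
rewrite sp_dot_cl_TMl ?F_at_real // /F_at !A_at_e1 !A_at_e2 !negbK.
rewrite -[sp_dot (defect a b) (sp_proj a b phi)](mulKf Nv) -Pv.
rewrite -[sp_dot (defect (~~ a) (~~ b)) (sp_proj (~~ a) (~~ b) phi)](mulKf Nw).
rewrite -Pw S1 S2.
by field; rewrite Nv Nw.
Qed.

(* By orthogonality of the splitting, the right-hand side above is
   Re<nabla_X phi^+ - lam X.phi^-, phi^+> for (a,b) = (+,+), and
   Re<nabla_X phi^- - lam X.phi^+, phi^-> for (a,b) = (+,-). *)
Lemma defect_split_plus :
  'Re (sp_herm (sp_plus (nablaX x1 x2 psi1 psi2)) (sp_plus phi))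
  - 'Re (sp_herm (sp_scale lam (cl_TM x1 x2 (sp_minus phi))) (sp_plus phi))
  = sp_dot (defect true true) (sp_proj true true phi)
    + sp_dot (defect false false) (sp_proj false false phi).
Proof.
rewrite /sp_dot -!raddfB -raddfD; congr ('Re _).
rewrite /defect /sp_herm /sp_plus /sp_minus /sp_sub /sp_add /sp_scale /sp_proj.
rewrite /cl_TM /nablaX /sp_add /sp_scale /cl_e1 /cl_e2 /=.
rewrite ?(addr0, add0r, rmorph0, mulr0); ring.
Qed.

Lemma defect_split_minus :
  'Re (sp_herm (sp_minus (nablaX x1 x2 psi1 psi2)) (sp_minus phi))
  - 'Re (sp_herm (sp_scale lam (cl_TM x1 x2 (sp_plus phi))) (sp_minus phi))
  = sp_dot (defect true false) (sp_proj true false phi)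
    + sp_dot (defect false true) (sp_proj false true phi).
Proof.
rewrite /sp_dot -!raddfB -raddfD; congr ('Re _).
rewrite /defect /sp_herm /sp_plus /sp_minus /sp_sub /sp_add /sp_scale /sp_proj.
rewrite /cl_TM /nablaX /sp_add /sp_scale /cl_e1 /cl_e2 /=.
rewrite ?(addr0, add0r, rmorph0, mulr0); ring.
Qed.
End PairedForms.
End TwistedSpinorFibre.

Arguments F_at_identity {C lam phi psi1 psi2 x1 x2 a b}.

Theorem mainTheorem8 (C : numClosedFieldType) (lam h : C)
    (phi psi1 psi2 : spinor C) :
  (* lambda in R \cup iR *)
  (lam \is Num.real \/ exists r : C, r \is Num.real /\ lam = 'i * r) ->
  (* H(p) = |H(p)| e3 *)
  0 <= h ->
  (* phi^{++}, phi^{--}, phi^{+-}, phi^{-+} non-zero at p *)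
  phi true true != 0 -> phi false false != 0 ->
  phi true false != 0 -> phi false true != 0 ->
  (* D phi = H . phi - 2 lam phi  at p *)
  dirac_at psi1 psi2
    = sp_sub (sp_scale h (cl_e3 phi)) (sp_scale (2 * lam) phi) ->
  (* X|phi^+|^2 = 2 Re<lam X.phi^-, phi^+>, with X|phi^+|^2 = 2 Re<nabla_X phi^+, phi^+> *)
  (forall x1 x2 : C, x1 \is Num.real -> x2 \is Num.real ->
     2 * 'Re (sp_herm (sp_plus (nablaX x1 x2 psi1 psi2)) (sp_plus phi))
     = 2 * 'Re (sp_herm (sp_scale lam (cl_TM x1 x2 (sp_minus phi))) (sp_plus phi))) ->
  (* X|phi^-|^2 = 2 Re<lam X.phi^+, phi^->, with X|phi^-|^2 = 2 Re<nabla_X phi^-, phi^-> *)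
  (forall x1 x2 : C, x1 \is Num.real -> x2 \is Num.real ->
     2 * 'Re (sp_herm (sp_minus (nablaX x1 x2 psi1 psi2)) (sp_minus phi))
     = 2 * 'Re (sp_herm (sp_scale lam (cl_TM x1 x2 (sp_plus phi))) (sp_minus phi))) ->
  forall x1 x2 : C, x1 \is Num.real -> x2 \is Num.real ->
    'Re (sp_herm (cl_TM (Fend_plus lam phi psi1 psi2 x1 x2).1
                        (Fend_plus lam phi psi1 psi2 x1 x2).2
                        (cl_e3 (sp_proj false false phi)))
                 (sp_proj true true phi)) = 0
 /\ 'Re (sp_herm (cl_TM (Fend_minus lam phi psi1 psi2 x1 x2).1
                        (Fend_minus lam phi psi1 psi2 x1 x2).2
                        (cl_e3 (sp_proj false true phi)))
                 (sp_proj true false phi)) = 0.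
Proof.
move=> _ _ nz_pp nz_mm nz_pm nz_mp _ norm_plus norm_minus x1 x2 R1 R2.
have two : (2 : C) != 0 by rewrite pnatr_eq0.
have half (u v : C) : 2 * u = 2 * v -> u - v = 0.
  by move=> /(mulfI two) ->; rewrite subrr.
split.
- apply: etrans (F_at_identity nz_pp nz_mm) _.
  by rewrite -defect_split_plus half // norm_plus.
- apply: etrans (F_at_identity nz_pm nz_mp) _.
  by rewrite -defect_split_minus half // norm_minus.
Qed.
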